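(* Let $G$ be a connected nontrivial graph with $m$ vertices and let $n\geq4$. If $\min\{n^2\lambda(G),\ (n-1)(m+2e(G))\}\geq 2n\delta(G)+2n-4$, then $G\boxtimes K_n$ is maximally restricted edge-connected, i.e. $\lambda'(G\boxtimes K_n)=\xi(G\boxtimes K_n)$.
   Context: All graphs are finite, simple and undirected; ''nontrivial'' means having at least two vertices. $K_n$ denotes the complete graph on $n$ vertices. For a graph $G$: $e(G)=|E(G)|$; $\delta(G)$ is the minimum degree; $\lambda(G)$ is the edge-connectivity; for an edge $uv$, its edge-degree is $d_G(u)+d_G(v)-2$, and $\xi(G)$ is the minimum edge-degree over all edges. A restricted edge-cut of a connected graph $G$ is a set $S\subseteq E(G)$ such that $G-S$ is disconnected and every component of $G-S$ has at least $2$ vertices; $\lambda'(G)$ is the minimum cardinality of a restricted edge-cut. A graph $G$ is maximally restricted edge-connected if $\lambda'(G)=\xi(G)$. The strong product $G\boxtimes H$ has vertex set $V(G)\times V(H)$, with $(x_1,y_1)$ and $(x_2,y_2)$ adjacent iff either $x_1=x_2$ and $y_1y_2\in E(H)$, or $y_1=y_2$ and $x_1x_2\in E(G)$, or $x_1x_2\in E(G)$ and $y_1y_2\in E(H)$. (One has $\xi(G\boxtimes K_n)=2n\delta(G)+2n-4$.) *)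

From mathcomp Require Import all_boot.
Set Implicit Arguments. Unset Strict Implicit. Unset Printing Implicit Defensive.

(* A finite simple graph on vertex type V is an adjacency relation
   g : rel V, assumed symmetric and irreflexive where needed. Edges are
   the 2-element vertex sets {x,y} with g x y. *)
Section Graphs.
Variable V : finType.
Implicit Types (g : rel V) (S : {set {set V}}).

Definition edges g : {set {set V}} :=
  [set A : {set V} | [exists x, exists y, g x y && (A == [set x; y])]].

Definition nedges g : nat := #|edges g|.

Definition deg g (x : V) : nat := #|[set y | g x y]|.

(* delta(G) (the default #|V| exceeds every degree) *)
Definition mindeg g : nat := \big[minn/#|V|]_(x : V) deg g x.

Definition min_edge_degree g : nat :=
  \big[minn/(2 * #|V|)]_(p : V * V | g p.1 p.2) (deg g p.1 + deg g p.2 - 2).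

Definition gconnected g : Prop := forall x y : V, connect g x y.

Definition edel g S : rel V := fun x y => g x y && ([set x; y] \notin S).

Definition is_edge_cut g S : bool :=
  (S \subset edges g) && ~~ [forall x, forall y, connect (edel g S) x y].

Definition is_restricted_edge_cut g S : bool :=
  is_edge_cut g S && [forall x, 2 <= #|[set y | connect (edel g S) x y]|].

Definition edge_conn g : nat :=
  \big[minn/nedges g]_(S : {set {set V}} | is_edge_cut g S) #|S|.

(* lambda'(G) (only meaningful when a restricted edge-cut exists) *)
Definition restr_edge_conn g : nat :=
  \big[minn/nedges g]_(S : {set {set V}} | is_restricted_edge_cut g S) #|S|.

Definition max_restricted_edge_connected g : Prop :=
  (exists S, is_restricted_edge_cut g S) /\
  restr_edge_conn g = min_edge_degree g.
End Graphs.

Definition strong_prod (T1 T2 : finType) (g : rel T1) (h : rel T2) : rel (T1 * T2) :=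
  fun p q => [|| (p.1 == q.1) && h p.2 q.2,
                 (p.2 == q.2) && g p.1 q.1
               | g p.1 q.1 && h p.2 q.2].

Definition complete_graph (n : nat) : rel 'I_n := fun i j => i != j.
Arguments complete_graph n : clear implicits.

From mathcomp Require Import all_boot order zify.
Set Implicit Arguments. Unset Strict Implicit. Unset Printing Implicit Defensive.
Import Order.TTheory.

(* In H = G ⊠ K_n the vertex (x, i) has degree n - 1 + n d(x), so xi(H) =
   2 n delta + 2 n - 4, and the edges leaving two copies (x0, i), (x0, j) of a
   vertex of minimum degree form a restricted edge-cut of exactly that size.
   Conversely, a restricted edge-cut contains all edges leaving a component X
   of H - S, where X and its complement both have at least two vertices.
   If every fibre {x} × K_n meets X, each vertex (y, j) outside X has at least
   max (deg_H (y, j) - (|V(H) \ X| - 1), d(y) + 1) neighbours in X, and summing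
   over the outside vertices gives at least xi(H) edges; symmetrically if every
   fibre meets the complement. Otherwise one fibre lies inside X and another
   avoids it: writing a(x) = |X ∩ {x} × K_n|, every level set {x | a(x) > t},
   t < n, is separated from its complement by an edge-cut of G, while an edge
   xy of G carries a(x) (n - a(y)) >= n (a(x) - a(y)) edges of the boundary, so
   the boundary has at least n^2 lambda(G) >= xi(H) edges. *)

Lemma card_set_nat_sum (W : finType) (P : pred W) :
  #|[set y | P y]| = \sum_y (P y : nat).
Proof. by rewrite -sum1dep_card big_mkcond; apply: eq_bigr => y _; case: (P y). Qed.

Lemma sum_pair (A B : finType) (F : A * B -> nat) :
  \sum_p F p = \sum_x \sum_j F (x, j).
Proof. by rewrite pair_bigA; apply: eq_bigr => -[]. Qed.

Lemma sum_ord_in_range a b m :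
  \sum_(t < m) ((b <= t) && (t < a) : nat) = minn a m - b.
Proof.
elim: m => [|m IH]; first by rewrite big_ord0; lia.
by rewrite big_ord_recr /= IH; case: (leqP b m) => hb; case: (ltnP m a) => ha /=; lia.
Qed.

Lemma sum_nat_set1 (I : finType) (i0 : I) (F : I -> nat) :
  \sum_i ((i == i0) * F i) = F i0.
Proof. by rewrite (bigD1 i0) //= eqxx mul1n big1 ?addn0 // => i /negbTE ->. Qed.

Lemma exists_ord_avoid3 n (a b c : 'I_n) : 3 < n ->
  exists j : 'I_n, [&& j != a, j != b & j != c].
Proof.
move=> n3; apply/existsP; apply: contraLR n3 => /existsPn none.
rewrite -leqNgt -[n in n <= _]card_ord; apply: leq_trans (card_size [:: a; b; c]).
by apply/subset_leq_card/subsetP => j _; have := none j; rewrite !inE -!negb_or negbK.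
Qed.

Section Degrees.
Variables (V : finType) (g : rel V).

Lemma deg_sum x : deg g x = \sum_y (g x y : nat).
Proof. exact: card_set_nat_sum. Qed.

Lemma mindeg_le x : mindeg g <= deg g x.
Proof. exact: (@bigmin_le_cond _ nat). Qed.

Lemma mindeg_attained : 0 < #|V| -> exists x, deg g x = mindeg g.
Proof.
case/card_gt0P => x0 _.
have [x _ E] := @eq_bigmin _ nat _ #|V| x0 predT (deg g) isT (fun x _ => max_card _).
by exists x; rewrite /mindeg E.
Qed.

Lemma exists_neighbour x : gconnected g -> 1 < #|V| -> exists y, g x y.
Proof.
move=> gc /card_gt1P [a [b [_ _ ab]]].
have [z xz] : exists z, x != z.
  by case: (eqVneq x a) => [->|]; [exists b | exists a].
case/connectP: (gc x z) => [[|y p]] /= => [_ zx|/andP[gxy _] _].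
  by rewrite zx eqxx in xz.
by exists y.
Qed.

Lemma mindeg_gt0 : gconnected g -> 1 < #|V| -> 0 < mindeg g.
Proof.
move=> gc V1; apply/(@bigmin_geP _ nat); split; first lia.
move=> x _; have [y gxy] := exists_neighbour x gc V1.
by apply/card_gt0P; exists y; rewrite inE.
Qed.

Lemma min_edge_degree_le u v :
  g u v -> min_edge_degree g <= deg g u + deg g v - 2.
Proof. by move=> guv; apply: (@bigmin_le_cond _ nat _ _ (u, v)). Qed.

Lemma min_edge_degree_ge d :
  0 < #|V| -> (forall x, d <= deg g x) -> d + d - 2 <= min_edge_degree g.
Proof.
case/card_gt0P => x0 _ hd; apply/(@bigmin_geP _ nat); split.
  by have := leq_trans (hd x0) (max_card _); lia.
by move=> [x y] _ /=; have := hd x; have := hd y; lia.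
Qed.

End Degrees.

Section Boundary.
Variables (W : finType) (r : rel W).
Hypotheses (rsym : symmetric r) (rirr : irreflexive r).
Implicit Types (Z : {set W}) (S : {set {set W}}).

Definition boundary_pairs Z : {set W * W} :=
  [set p | (p.1 \in Z) && (p.2 \notin Z) && r p.1 p.2].

Definition boundary Z : {set {set W}} :=
  [set [set p.1; p.2] | p in boundary_pairs Z].

Definition boundary_size Z : nat :=
  \sum_u \sum_v ((u \in Z) && (v \notin Z) && r u v).

Definition nbrs_in Z v : nat := \sum_u ((u \in Z) && r v u).

Lemma card_boundary Z : #|boundary Z| = boundary_size Z.
Proof.
have <- : #|boundary_pairs Z| = boundary_size Z.
  rewrite /boundary_size pair_bigA /= -sum1_card big_mkcond /=.
  by apply: eq_bigr => p _; rewrite inE; case: ifP.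
rewrite card_in_imset // => -[a b] [c d]; rewrite !inE /=.
move=> /andP[/andP[aZ bZ] _] /andP[/andP[cZ dZ] _] E.
have : a \in [set c; d] by rewrite -E !inE eqxx.
rewrite !inE => /orP[/eqP ac|/eqP ad]; last by rewrite -ad aZ in dZ.
have : b \in [set c; d] by rewrite -E !inE eqxx orbT.
rewrite !inE => /orP[/eqP bc|/eqP bd]; last by rewrite ac bd.
by rewrite bc cZ in bZ.
Qed.

Lemma boundary_sub_edges Z : boundary Z \subset edges r.
Proof.
apply/subsetP => A /imsetP [[a b]]; rewrite inE /= => /andP[_ rab] ->.
by rewrite inE; apply/existsP; exists a; apply/existsP; exists b; rewrite rab eqxx.
Qed.

Lemma notin_boundary Z x y : (x \in Z) = (y \in Z) -> [set x; y] \notin boundary Z.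
Proof.
move=> E; apply/imsetP => -[[a b]]; rewrite inE /= => /andP[/andP[aZ bZ] _] E2.
have : a \in [set x; y] by rewrite E2 !inE eqxx.
have : b \in [set x; y] by rewrite E2 !inE eqxx orbT.
rewrite !inE => /orP[/eqP eb|/eqP eb] /orP[/eqP ea|/eqP ea];
  move: aZ bZ E; rewrite ea eb; by case: (x \in Z); case: (y \in Z).
Qed.

Lemma boundary_closed Z S u w : boundary Z \subset S -> u \in Z ->
  connect (edel r S) u w -> w \in Z.
Proof.
move=> sZS + /connectP [p + ->]; elim: p u => [//|x p IH] u uZ /=.
move=> /andP[/andP[rux nS] pth]; apply: IH pth; apply/negPn/negP => xZ.
by move: nS; rewrite (subsetP sZS) //; apply/imsetP; exists (u, x); rewrite ?inE /= ?uZ ?xZ.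
Qed.

Lemma boundary_component_sub S x0 :
  boundary [set y | connect (edel r S) x0 y] \subset S.
Proof.
apply/subsetP => A /imsetP [[a b]]; rewrite !inE /= => /andP[/andP[x0a x0b] rab] ->.
apply/negPn/negP => nS; move: x0b; apply/negP/negPn.
by apply: connect_trans x0a (connect1 _); rewrite /edel rab nS.
Qed.

Lemma boundary_edge_cut Z u w : u \in Z -> w \notin Z -> is_edge_cut r (boundary Z).
Proof.
move=> uZ wZ; rewrite /is_edge_cut boundary_sub_edges /=; apply/forallPn; exists u.
apply/forallPn; exists w; apply/negP => /(boundary_closed (subxx _) uZ).
by rewrite (negbTE wZ).
Qed.

Lemma boundary_restricted_cut Z u w : u \in Z -> w \notin Z ->
  (forall x, exists y, [/\ x != y, r x y & (x \in Z) = (y \in Z)]) ->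
  is_restricted_edge_cut r (boundary Z).
Proof.
move=> uZ wZ hZ; rewrite /is_restricted_edge_cut (boundary_edge_cut uZ wZ) /=.
apply/forallP => x; have [y [xy rxy Exy]] := hZ x.
apply: (@leq_trans #|[set x; y]|); first by rewrite cards2 xy.
apply/subset_leq_card/subsetP => z; rewrite !inE => /orP[]/eqP->.
  exact: connect0.
by apply: connect1; rewrite /edel rxy notin_boundary.
Qed.

Lemma boundary_sizeC Z : boundary_size (~: Z) = boundary_size Z.
Proof.
rewrite /boundary_size exchange_big /=; apply: eq_bigr => u _; apply: eq_bigr => v _.
by rewrite !inE negbK rsym; case: (u \in Z); case: (v \in Z); rewrite ?andbF.
Qed.

Lemma boundary_size_outside Z : boundary_size Z = \sum_v (v \notin Z) * nbrs_in Z v.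
Proof.
rewrite /boundary_size exchange_big /=; apply: eq_bigr => v _.
case: (v \in Z) => /=; first by rewrite mul0n big1 // => u _; rewrite andbF.
by rewrite mul1n; apply: eq_bigr => u _; rewrite andbT rsym.
Qed.

Lemma boundary_size_ge Z c : (forall v, v \notin Z -> c <= nbrs_in Z v) ->
  #|~: Z| * c <= boundary_size Z.
Proof.
move=> hc; rewrite boundary_size_outside.
have -> : #|~: Z| = \sum_v (v \notin Z : nat).
  by rewrite -card_set_nat_sum; apply: eq_card => u; rewrite !inE.
rewrite big_distrl /=; apply: leq_sum => v _.
by case vZ: (v \in Z) => //=; rewrite !mul1n hc ?vZ.
Qed.

Lemma deg_le_nbrs_in Z v : v \notin Z -> deg r v <= nbrs_in Z v + (#|~: Z| - 1).
Proof.
move=> vZ.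
have -> : deg r v = nbrs_in Z v + \sum_u ((u \notin Z) && r v u).
  rewrite deg_sum /nbrs_in -big_split /=; apply: eq_bigr => u _.
  by case: (u \in Z); case: (r v u).
suff : \sum_u ((u \notin Z) && r v u) < #|~: Z| by lia.
have -> : #|~: Z| = \sum_u (u \notin Z : nat).
  by rewrite -card_set_nat_sum; apply: eq_card => u; rewrite !inE.
rewrite (bigD1 v) //= [X in _ < X](bigD1 v) //= rirr andbF vZ add0n add1n ltnS.
by apply: leq_sum => u _; case: (u \in Z); case: (r v u).
Qed.

Lemma boundary_size_edge_le u v : r u v -> boundary_size [set u; v] <= deg r u + deg r v - 2.
Proof.
move=> ruv; set Z := [set u; v].
have nbr_le w : w \in Z -> nbrs_in (~: Z) w + 1 <= deg r w.
  move=> wZ; rewrite deg_sum.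
  have [w' w'Z rww'] : exists2 w', w' \in Z & r w w'.
    move: wZ; rewrite !inE => /orP[]/eqP->; first by exists v; rewrite ?inE ?eqxx ?orbT.
    by exists u; rewrite ?inE ?eqxx // rsym.
  rewrite /nbrs_in (bigD1 w') //= [X in _ <= X](bigD1 w') //= inE w'Z rww' add0n addnC.
  by rewrite leq_add2l; apply: leq_sum => x _; case: (_ \in _).
have uv : u != v by apply: contraTneq ruv => ->; rewrite rirr.
rewrite -boundary_sizeC boundary_size_outside (bigD1 u) ?inE ?eqxx //= (bigD1 v) ?inE ?eqxx ?orbT;
  last by rewrite eq_sym uv.
rewrite big1 => [|w /andP[wu wv]]; last by rewrite !inE (negbTE wu) (negbTE wv).
have := nbr_le u; have := nbr_le v; rewrite !inE !eqxx orbT /= => /(_ isT) + /(_ isT).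
lia.
Qed.

End Boundary.

Lemma strong_prod_sym (T1 T2 : finType) (g : rel T1) (h : rel T2) :
  symmetric g -> symmetric h -> symmetric (strong_prod g h).
Proof. by move=> gs hs p q; rewrite /strong_prod gs hs (eq_sym p.1) (eq_sym p.2). Qed.

Lemma strong_prod_irr (T1 T2 : finType) (g : rel T1) (h : rel T2) :
  irreflexive g -> irreflexive h -> irreflexive (strong_prod g h).
Proof. by move=> gi hi p; rewrite /strong_prod gi hi !andbF. Qed.

Lemma complete_graph_sym n : symmetric (complete_graph n).
Proof. by move=> i j; rewrite /complete_graph eq_sym. Qed.

Lemma complete_graph_irr n : irreflexive (complete_graph n).
Proof. by move=> i; rewrite /complete_graph eqxx. Qed.

Section StrongProductComplete.
Variables (T : finType) (g : rel T) (n : nat).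
Hypotheses (gsym : symmetric g) (girr : irreflexive g).
Local Notation H := (strong_prod g (complete_graph n)).
Implicit Types X : {set T * 'I_n}.

Let H_sym : symmetric H := strong_prod_sym gsym (@complete_graph_sym n).
Let H_irr : irreflexive H := strong_prod_irr girr (@complete_graph_irr n).

Lemma fibre_edge x (i j : 'I_n) : i != j -> H (x, i) (x, j).
Proof. by rewrite /strong_prod /complete_graph /= eqxx => ->. Qed.

Lemma deg_strong_prod_complete x i : deg H (x, i) = n.-1 + n * deg g x.
Proof.
have Kdeg : \sum_j (i != j : nat) = n.-1.
  rewrite -card_set_nat_sum -[in RHS](card_ord n) -(cardsC1 i); apply: eq_card => j.
  by rewrite !inE eq_sym.
rewrite deg_sum -(pair_bigA _ (fun y j => (H (x, i) (y, j) : nat))) /=.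
rewrite (eq_bigr (fun y => (y == x) * n.-1 + g x y * n)) => [|y _]; last first.
  rewrite /strong_prod /complete_graph /=; case: (eqVneq y x) => [->|_].
    rewrite girr mul1n mul0n addn0 -Kdeg; apply: eq_bigr => j _.
    by rewrite /= andbF !orbF.
  rewrite mul0n add0n mulnC -[n in n * _]card_ord -sum_nat_const.
  by apply: eq_bigr => j _; case: (g x y); case: (i == j); case: (i != j).
by rewrite big_split /= sum_nat_set1 -big_distrl /= -deg_sum mulnC.
Qed.

Definition fibre_card X x := \sum_i ((x, i) \in X : nat).

Lemma fibre_card_le X x : fibre_card X x <= n.
Proof.
rewrite -[n in _ <= n]card_ord -sum1_card.
by apply: leq_sum => i _; case: (_ \in _).
Qed.

Lemma fibre_card_compl X y : \sum_j ((y, j) \notin X : nat) = n - fibre_card X y.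
Proof.
suff : \sum_j ((y, j) \notin X : nat) + fibre_card X y = n by lia.
rewrite /fibre_card -big_split /= -[n in _ = n]card_ord -sum1_card.
by apply: eq_bigr => j _; case: (_ \in _).
Qed.

Lemma nbrs_in_transversal X v : (forall x, exists i, (x, i) \in X) -> v \notin X ->
  (deg g v.1).+1 <= nbrs_in H X v.
Proof.
case: v => y i /= hX vX; rewrite /nbrs_in sum_pair.
apply: (@leq_trans (\sum_x ((x == y) + g y x))).
  by rewrite big_split /= -deg_sum (bigD1 y) //= eqxx big1 // => x /negbTE ->.
apply: leq_sum => x _; have [j xjX] := hX x.
apply: (@leq_trans (((x, j) \in X) && H (y, i) (x, j))); last first.
  by rewrite (bigD1 j) //= leq_addr.
rewrite xjX /= /strong_prod /complete_graph /=.
case: (eqVneq x y) => [exy|_]; last by case: (g y x); case: (i == j).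
have nij : i != j by apply: contraNneq vX => ->; rewrite -exy.
by rewrite exy girr nij.
Qed.

Lemma boundary_size_ge_transversal X : (forall x, exists i, (x, i) \in X) ->
  2 <= #|~: X| -> 0 < mindeg g -> 4 <= n ->
  2 * n * mindeg g + 2 * n - 4 <= boundary_size H X.
Proof.
move=> hX k2 d1 n4; set k := #|~: X|; set d := mindeg g.
have [hk|hk] := leqP k (n * d + n - 2).
  (* k (n d + n - k) is concave in k and equals the target at k = 2 and
     k = n d + n - 2. *)
  have : k * (n * d + n - 1 - (k - 1)) <= boundary_size H X.
    apply: (boundary_size_ge H_sym) => [[x i]] vX.
    have := deg_le_nbrs_in H_irr vX.
    rewrite deg_strong_prod_complete // -/k.
    have := mindeg_le g x; rewrite -/d; nia.
  by apply: leq_trans; nia.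
have : k * d.+1 <= boundary_size H X.
  apply: (boundary_size_ge H_sym) => v vX.
  by apply: leq_trans (nbrs_in_transversal hX vX); rewrite ltnS mindeg_le.
by apply: leq_trans; nia.
Qed.

Lemma boundary_size_ge_fibres X :
  \sum_x \sum_y g x y * (fibre_card X x * (n - fibre_card X y)) <= boundary_size H X.
Proof.
rewrite /boundary_size sum_pair.
have -> : \sum_x \sum_y g x y * (fibre_card X x * (n - fibre_card X y)) =
   \sum_x \sum_i \sum_y \sum_j (g x y * (((x, i) \in X) * ((y, j) \notin X))).
  apply: eq_bigr => x _; rewrite exchange_big /=; apply: eq_bigr => y _.
  rewrite -fibre_card_compl /fibre_card big_distrl /= big_distrr /=.
  by apply: eq_bigr => i _; rewrite !big_distrr.
apply: leq_sum => x _; apply: leq_sum => i _; rewrite sum_pair.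
apply: leq_sum => y _; apply: leq_sum => j _.
rewrite /strong_prod /complete_graph /=.
by case: (g x y); case: (_ \in X); case: (_ \in X); case: (x == y); case: (i == j).
Qed.

Lemma edge_conn_le_level X t x1 x0 :
  (forall i, (x1, i) \in X) -> (forall i, (x0, i) \notin X) -> t < n ->
  edge_conn g <= \sum_x \sum_y (g x y && (fibre_card X y <= t) && (t < fibre_card X x) : nat).
Proof.
move=> h1 h0 tn; set L := [set x | t < fibre_card X x].
have cut : is_edge_cut g (boundary g L).
  apply: (@boundary_edge_cut _ _ _ x1 x0); rewrite inE /fibre_card.
    by rewrite (eq_bigr (fun _ => 1)) => [|i _]; rewrite ?h1 // sum1_card card_ord.
  by rewrite big1 // => i _; rewrite (negbTE (h0 i)).
apply: leq_trans (@bigmin_le_cond _ nat _ _ _ _ _ cut) _.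
rewrite card_boundary leq_eqVlt; apply/orP; left; apply/eqP.
apply: eq_bigr => x _; apply: eq_bigr => y _.
by rewrite !inE -leqNgt; case: (g x y); case: (t < _); case: (_ <= t).
Qed.

Lemma boundary_size_ge_edge_conn X x1 x0 :
  (forall i, (x1, i) \in X) -> (forall i, (x0, i) \notin X) ->
  n ^ 2 * edge_conn g <= boundary_size H X.
Proof.
move=> h1 h0; apply: leq_trans (boundary_size_ge_fibres X).
set f := fibre_card X.
apply: (@leq_trans (n * \sum_x \sum_y g x y * (f x - f y))); last first.
  rewrite big_distrr /=; apply: leq_sum => x _; rewrite big_distrr /=.
  apply: leq_sum => y _; have := fibre_card_le X x; have := fibre_card_le X y.
  by case: (g x y); rewrite ?mul0n ?muln0 // !mul1n -/f; nia.
rewrite expnS -mulnA leq_mul2l; apply/orP; right.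
(* the edge xy lies in the t-th level cut for exactly f x - f y values of t *)
have -> : \sum_x \sum_y g x y * (f x - f y) =
   \sum_(t < n) \sum_x \sum_y (g x y && (f y <= t) && (t < f x) : nat).
  rewrite [RHS]exchange_big /=; apply: eq_bigr => x _.
  rewrite [RHS]exchange_big /=; apply: eq_bigr => y _.
  have fx : f x <= n := fibre_card_le X x.
  rewrite -[in f x - f y](minn_idPl fx) -sum_ord_in_range big_distrr /=.
  by apply: eq_bigr => t _; case: (g x y); rewrite ?mul1n ?mul0n.
rewrite -[n in n * _]card_ord -sum_nat_const; apply: leq_sum => t _.
exact: edge_conn_le_level h1 h0 (ltn_ord t).
Qed.

Lemma boundary_size_lower_bound X : 2 <= #|X| -> 2 <= #|~: X| -> 0 < mindeg g -> 4 <= n ->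
  2 * n * mindeg g + 2 * n - 4 <= n ^ 2 * edge_conn g ->
  2 * n * mindeg g + 2 * n - 4 <= boundary_size H X.
Proof.
move=> X2 CX2 d1 n4 hl.
have [hX|/forallPn [x0 /existsPn h0]] := boolP [forall x, [exists i, (x, i) \in X]].
  apply: boundary_size_ge_transversal => // x.
  by have /existsP := forallP hX x.
have [hC|/forallPn [x1 /existsPn h1]] := boolP [forall x, [exists i, (x, i) \in ~: X]].
  rewrite -(boundary_sizeC H_sym); apply: boundary_size_ge_transversal; rewrite ?setCK // => x.
  by have /existsP := forallP hC x.
apply: leq_trans hl (@boundary_size_ge_edge_conn X x1 x0 _ h0) => i.
by have := h1 i; rewrite inE negbK.
Qed.

Lemma restricted_cut_lower_bound (S : {set {set T * 'I_n}}) :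
  0 < mindeg g -> 4 <= n -> 2 * n * mindeg g + 2 * n - 4 <= n ^ 2 * edge_conn g ->
  is_restricted_edge_cut H S -> 2 * n * mindeg g + 2 * n - 4 <= #|S|.
Proof.
move=> d1 n4 hl /andP[/andP[_ /forallPn [x0 /forallPn [y0 nc]]] /forallP comp2].
apply: leq_trans (subset_leq_card (boundary_component_sub H S x0)).
rewrite card_boundary; apply: boundary_size_lower_bound => //.
apply: leq_trans (comp2 y0) (subset_leq_card _); apply/subsetP => z.
have edel_sym : symmetric (edel H S) by move=> a b; rewrite /edel H_sym setUC.
rewrite !inE => y0z; apply: contra nc => x0z.
by rewrite (connect_trans x0z) // (sym_connect_sym edel_sym).
Qed.

Lemma pair_fibre_restricted_cut x0 (i0 i1 : 'I_n) : 3 < n -> i0 != i1 ->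
  is_restricted_edge_cut H (boundary H [set (x0, i0); (x0, i1)]).
Proof.
move=> n3 i01; set Z := [set (x0, i0); (x0, i1)].
have other_fibre y (j : 'I_n) : exists2 j', j != j' & (y, j') \notin Z.
  have [j' /and3P[j'0 j'1 j'j]] := exists_ord_avoid3 i0 i1 j n3.
  by exists j'; rewrite 1?eq_sym // !inE !xpair_eqE !negb_or !negb_and j'0 j'1 !orbT.
have [i2 _ i2Z] := other_fibre x0 i0.
apply: (@boundary_restricted_cut _ _ _ (x0, i0) (x0, i2)) => //; first by rewrite !inE eqxx.
move=> [y j]; have [yjZ|yjZ] := boolP ((y, j) \in Z).
  move: (yjZ); rewrite !inE !xpair_eqE => /orP[]/andP[/eqP-> /eqP->].
    by exists (x0, i1); rewrite xpair_eqE eqxx i01 fibre_edge // !inE !eqxx orbT.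
  by exists (x0, i0); rewrite xpair_eqE eqxx eq_sym i01 fibre_edge 1?eq_sym // !inE !eqxx.
have [j' jj' j'Z] := other_fibre y j.
by exists (y, j'); rewrite xpair_eqE eqxx jj' fibre_edge // (negbTE j'Z).
Qed.

Lemma card_boundary_pair_fibre x0 (i0 i1 : 'I_n) : i0 != i1 ->
  #|boundary H [set (x0, i0); (x0, i1)]| <= 2 * n * deg g x0 + 2 * n - 4.
Proof.
move=> i01; rewrite card_boundary.
apply: leq_trans (boundary_size_edge_le H_sym H_irr (fibre_edge x0 i01)) _.
by rewrite !deg_strong_prod_complete; have := ltn_ord i0; lia.
Qed.

Lemma min_edge_degree_strong_prod_complete : 0 < #|T| -> 1 < n ->
  min_edge_degree H = 2 * n * mindeg g + 2 * n - 4.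
Proof.
move=> T0 n1; have [x0 dx0] := mindeg_attained g T0.
have i01 : Ordinal (ltnW n1) != Ordinal n1 by [].
apply/eqP; rewrite eqn_leq; apply/andP; split.
  apply: leq_trans (min_edge_degree_le (fibre_edge x0 i01)) _.
  by rewrite !deg_strong_prod_complete dx0; lia.
have H_nonempty : 0 < #|{: T * 'I_n}| by rewrite card_prod card_ord muln_gt0 T0; lia.
apply: leq_trans (min_edge_degree_ge (d := n.-1 + n * mindeg g) H_nonempty _); first lia.
by case=> x i; rewrite deg_strong_prod_complete leq_add2l leq_mul2l mindeg_le orbT.
Qed.

End StrongProductComplete.

Lemma max_restricted_edge_connected_of_cut (V : finType) (g : rel V) S0 k :
  min_edge_degree g = k -> is_restricted_edge_cut g S0 -> #|S0| <= k ->
  (forall S, is_restricted_edge_cut g S -> k <= #|S|) ->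
  max_restricted_edge_connected g.
Proof.
move=> xik S0cut S0k hS; split; first by exists S0.
apply/eqP; rewrite xik eqn_leq (leq_trans (@bigmin_le_cond _ nat _ _ _ _ _ S0cut) S0k) /=.
apply/(@bigmin_geP _ nat); split => //.
by apply: leq_trans (hS _ S0cut) (subset_leq_card _); case/andP: S0cut => /andP[].
Qed.

Unset Implicit Arguments.

Theorem corollary3p8 (T : finType) (g : rel T) (n : nat) :
  symmetric g -> irreflexive g -> gconnected g -> 1 < #|T| -> 4 <= n ->
  2 * n * mindeg g + 2 * n - 4 <=
    minn (n ^ 2 * edge_conn g) ((n - 1) * (#|T| + 2 * nedges g)) ->
  max_restricted_edge_connected (strong_prod g (complete_graph n)).
Proof.
move=> gsym girr gc T1 n4 hmin.
(* Only the first term of the minimum is needed. *)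
have hl := leq_trans hmin (geq_minl _ _).
have d1 := mindeg_gt0 gc T1.
have [x0 dx0] := mindeg_attained g (ltnW T1).
have n1 : 1 < n by lia.
have i01 : Ordinal (ltnW n1) != Ordinal n1 by [].
apply: (max_restricted_edge_connected_of_cut
          (min_edge_degree_strong_prod_complete girr (ltnW T1) n1)
          (pair_fibre_restricted_cut g x0 n4 i01)).
  by rewrite -dx0; apply: card_boundary_pair_fibre.
by move=> S; apply: restricted_cut_lower_bound.
Qed.
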